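(* Consider an $N$-player quadratic game with costs $J_m(x)=\frac12 x^\top Q_m x+b_m^\top x+p_m$, where $Q_m\in\mathbb{R}^{N\times N}$ is symmetric, $b_m\in\mathbb{R}^N$, $p_m\in\mathbb{R}$. Let players $1,\dots,n$ be deceptive, each $i\in[n]$ deceiving a nonempty set $\mathcal{D}_i\subset[N]\setminus\{i\}$, and let $\delta=(\delta_1,\dots,\delta_n)\in\mathbb{R}^n$ be fixed. Let $\bar\omega_1,\dots,\bar\omega_N$ be pairwise distinct positive rationals, $T>0$ a common period of all $\sin(\bar\omega_m\tau)$, and $\tilde\mu$ defined by $\tilde\mu_m(\tau)=\sin(\bar\omega_m\tau)+\delta_m\sum_{j\in\mathcal{D}_m}\sin(\bar\omega_j\tau)$ for $m\in[n]$ and $\tilde\mu_m(\tau)=\sin(\bar\omega_m\tau)$ for $m\notin[n]$. Then for every $a>0$, $k>0$, $u\in\mathbb{R}^N$ and $m\in[N]$, $$\frac{1}{T}\int_0^T -\frac{2k}{a}J_m\big(u+a\tilde\mu(\tau)\big)\sin(\bar\omega_m\tau)\,d\tau=-k\big(\mathcal{Q}_\delta u+\mathcal{B}_\delta\big)_m$$ exactly (with no remainder term), where $\mathcal{Q}_\delta\in\mathbb{R}^{N\times N}$ has $m$-th row $(Q_m)_{m:}+\sum_{j\in[n]:\,m\in\mathcal{D}_j}\delta_j (Q_m)_{j:}$ and $\mathcal{B}_\delta\in\mathbb{R}^N$ has $m$-th entry $(b_m)_m+\sum_{j\in[n]:\,m\in\mathcal{D}_j}\delta_j (b_m)_j$.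
   Context: For a matrix $Q$, $(Q)_{j:}$ denotes its $j$-th row; for a vector $b$, $(b)_j$ its $j$-th entry. *)

From HB Require Import structures.
From mathcomp Require Import all_boot all_order all_algebra.
From mathcomp Require Import all_classical all_reals all_analysis.
Set Implicit Arguments. Unset Strict Implicit. Unset Printing Implicit Defensive.
Import Order.TTheory GRing.Theory Num.Theory.
Import numFieldNormedType.Exports.
Local Open Scope ring_scope.

(* Players are indexed by 'I_N; the deceptive players 1..n are the
   ordinals widen_ord hn j for j : 'I_n (i.e. the first n players). *)

Definition Jcost (R : realType) (N : nat) (Q : 'I_N -> 'M[R]_N)
  (b : 'I_N -> 'cV[R]_N) (p : 'I_N -> R) (m : 'I_N) (x : 'cV[R]_N) : R :=
  2^-1 * (x^T *m Q m *m x) ord0 ord0 + ((b m)^T *m x) ord0 ord0 + p m.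

Definition mu_tilde (R : realType) (N n : nat) (hn : (n <= N)%N)
  (om : 'I_N -> R) (delta : 'I_n -> R) (D : 'I_n -> {set 'I_N}) (tau : R)
  : 'cV[R]_N :=
  \col_(m < N) (sin (om m * tau) +
     \sum_(i < n | widen_ord hn i == m)
        delta i * \sum_(j in D i) sin (om j * tau)).

Definition Qdelta (R : realType) (N n : nat) (hn : (n <= N)%N)
  (Q : 'I_N -> 'M[R]_N) (delta : 'I_n -> R) (D : 'I_n -> {set 'I_N})
  : 'M[R]_N :=
  \matrix_(m < N, l < N) (Q m m l +
     \sum_(j < n | m \in D j) delta j * Q m (widen_ord hn j) l).

Definition Bdelta (R : realType) (N n : nat) (hn : (n <= N)%N)
  (b : 'I_N -> 'cV[R]_N) (delta : 'I_n -> R) (D : 'I_n -> {set 'I_N})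
  : 'cV[R]_N :=
  \col_(m < N) (b m m ord0 +
     \sum_(j < n | m \in D j) delta j * b m (widen_ord hn j) ord0).

From HB Require Import structures.
From mathcomp Require Import all_boot all_order all_algebra.
From mathcomp Require Import all_classical all_reals all_analysis.
From mathcomp Require Import ring.
Import Order.TTheory GRing.Theory Num.Theory.
Import numFieldNormedType.Exports.
Local Open Scope classical_set_scope.
Local Open Scope ring_scope.

(* Write the perturbation as [mu_tilde t = M *m s t], where [s t] is the vector
   of dithers [sin (om j * t)] and [M] is the identity plus the deception
   pattern.  Since [J_m] is quadratic,
     J_m (u + a M s) = J_m u + a (Q_m u + b_m)^T M s + a^2/2 s^T M^T Q_m M s
   with no remainder.  Averaged against [sin (om m * t)] over a common period,
   the constant term vanishes, the linear term keeps only its [m]-th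
   coordinate (orthogonality of sines with distinct positive frequencies), and
   the quadratic term vanishes because a product of three sines is a sum of
   four sines.  Finally the [m]-th coordinate of [(Q_m u + b_m)^T M] is the
   [m]-th entry of [Q_delta u + B_delta]. *)

Section trigonometric_integrals.
Context {R : realType}.
Notation mu := (@lebesgue_measure R).

Lemma continuous_integrable_itv (a b : R) (f : R -> R) : continuous f ->
  mu.-integrable `[a, b] (EFin \o f).
Proof.
move=> cf; apply: continuous_compact_integrable; first exact: segment_compact.
exact/continuous_subspaceT.
Qed.

Lemma continuous_sum (I : Type) (s : seq I) (P : pred I) (F : I -> R -> R) :
  (forall i, continuous (F i)) ->
  continuous (fun x => \sum_(i <- s | P i) F i x).
Proof.
move=> cF; elim: s => [|i s IHs].
  by under eq_fun do rewrite big_nil; exact: cst_continuous.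
under eq_fun do rewrite big_cons; case: (P i) => // x.
by apply: continuousD; [exact: cF | exact: IHs].
Qed.

Lemma continuous_mul (f g : R -> R) : continuous f -> continuous g ->
  continuous (fun t => f t * g t).
Proof. by move=> cf cg x; apply: continuousM; [exact: cf | exact: cg]. Qed.

Lemma Rintegral_itv_sum (a b : R) (I : Type) (s : seq I) (P : pred I)
    (F : I -> R -> R) : (forall i, continuous (F i)) ->
  \int[mu]_(x in `[a, b]) (\sum_(i <- s | P i) F i x) =
  \sum_(i <- s | P i) \int[mu]_(x in `[a, b]) F i x.
Proof.
move=> cF; elim: s => [|i s IHs].
  by under eq_Rintegral do rewrite big_nil; rewrite big_nil Rintegral_cst // mul0r.
under eq_Rintegral do rewrite big_cons; rewrite big_cons.
case: (P i) => //; rewrite RintegralD ?IHs //.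
- exact: continuous_integrable_itv.
- exact/continuous_integrable_itv/continuous_sum.
Qed.

Lemma Rintegral_itv_derive [f F : R -> R] [a b : R] : a < b -> continuous f ->
  (forall x : R, is_derive x (1 : R) F (f x)) ->
  \int[mu]_(x in `[a, b]) f x = F b - F a.
Proof.
move=> ab cf dF.
have cF : continuous F.
  by move=> x; apply/differentiable_continuous/derivable1_diffP; case: (dF x).
rewrite /Rintegral (continuous_FTC2 (F := F) ab) //.
- exact/continuous_subspaceT.
- split; first by move=> x _; case: (dF x).
  + exact/cvg_at_right_filter/cF.
  + exact/cvg_at_left_filter/cF.
- by move=> x _; rewrite derive1E derive_val.
Qed.

Lemma continuous_sin_scale (c : R) : continuous (fun t => sin (c * t)).
Proof.
by move=> x; apply: continuous_comp; [exact: mulrl_continuous | exact: continuous_sin].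
Qed.

Lemma continuous_cos_scale (c : R) : continuous (fun t => cos (c * t)).
Proof.
by move=> x; apply: continuous_comp; [exact: mulrl_continuous | exact: continuous_cos].
Qed.

Lemma is_derive_scale (c x : R) : is_derive x (1 : R) ( *%R c) c.
Proof.
apply: (is_derive_eq (is_deriveZ c (is_derive_id x (1 : R)))).
by rewrite scaler1.
Qed.

Lemma is_derive_sin_scale (c x : R) :
  is_derive x (1 : R) (fun t => sin (c * t)) (cos (c * x) * c).
Proof.
exact: (is_derive1_comp (is_derive_sin _) (is_derive_scale c x)).
Qed.

Lemma is_derive_cos_scale (c x : R) :
  is_derive x (1 : R) (fun t => cos (c * t)) (- sin (c * x) * c).
Proof.
exact: (is_derive1_comp (is_derive_cos _) (is_derive_scale c x)).
Qed.

(* [c * T] is a multiple of [2 * pi], stated without [pi]. *)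
Definition full_period (T c : R) := sin (c * T) = 0 /\ cos (c * T) = 1.

Lemma full_periodD T c d :
  full_period T c -> full_period T d -> full_period T (c + d).
Proof.
move=> [sc cc] [sd cd]; rewrite /full_period mulrDl sinD cosD sc cc sd cd.
by split; ring.
Qed.

Lemma full_periodN T c : full_period T c -> full_period T (- c).
Proof. by move=> [sc cc]; rewrite /full_period mulNr sinN cosN sc cc oppr0. Qed.

Lemma full_period_sin_periodic [T c : R] :
  (forall t, sin (c * (t + T)) = sin (c * t)) -> full_period T c.
Proof.
move=> per; have sT : sin (c * T) = 0 by have := per 0; rewrite add0r mulr0 sin0.
split=> //; have [->|c0] := eqVneq c 0; first by rewrite mul0r cos0.
have := per (pi / 2 / c); rewrite mulrDr mulrCA divff // mulr1.
by rewrite sinD sin_pihalf cos_pihalf mul1r mul0r addr0.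
Qed.

Variables (T : R) (T_gt0 : 0 < T).

Lemma Rintegral_sin_full_period c : full_period T c ->
  \int[mu]_(x in `[0, T]) sin (c * x) = 0.
Proof.
move=> [sc cc]; have [->|c0] := eqVneq c 0.
  by under eq_Rintegral do rewrite mul0r sin0; rewrite Rintegral_cst // mul0r.
have dF (x : R) :
    is_derive x (1 : R) (fun t => - c^-1 * cos (c * t)) (sin (c * x)).
  apply: (is_derive_eq (is_deriveZ (- c^-1) (is_derive_cos_scale c x))).
  by rewrite /GRing.scale /=; field.
rewrite (Rintegral_itv_derive T_gt0 (continuous_sin_scale c) dF).
by rewrite cc mulr0 cos0 subrr.
Qed.

Lemma Rintegral_cos_full_period c : full_period T c ->
  \int[mu]_(x in `[0, T]) cos (c * x) = if c == 0 then T else 0.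
Proof.
move=> [sc cc]; have [->|c0] := eqVneq c 0.
  have dF (x : R) : is_derive x (1 : R) id (cos (0 * x)).
    by apply: (is_derive_eq (is_derive_id x 1)); rewrite mul0r cos0.
  by rewrite (Rintegral_itv_derive T_gt0 (continuous_cos_scale 0) dF) subr0.
have dF (x : R) : is_derive x (1 : R) (fun t => c^-1 * sin (c * t)) (cos (c * x)).
  apply: (is_derive_eq (is_deriveZ (c^-1) (is_derive_sin_scale c x))).
  by rewrite /GRing.scale /=; field.
rewrite (Rintegral_itv_derive T_gt0 (continuous_cos_scale c) dF).
by rewrite sc !mulr0 sin0 mulr0 subrr.
Qed.

Lemma sin_mul_sin (c d t : R) :
  sin (c * t) * sin (d * t) = 2^-1 * (cos ((c - d) * t) - cos ((c + d) * t)).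
Proof. by rewrite !mulrDl !mulNr cosD cosD cosN sinN; field. Qed.

Lemma sin_mul_sin_mul_sin (c d e t : R) :
  sin (c * t) * sin (d * t) * sin (e * t) =
  4^-1 * \sum_(f <- [:: c + d - e; c - d + e; d + e - c; - (c + d + e)]) sin (f * t).
Proof.
by rewrite !big_cons big_nil mulNr sinN !mulrDl !mulNr !sinD !cosD !sinN !cosN; field.
Qed.

Lemma Rintegral_sin_mul_sin c d : full_period T c -> full_period T d ->
  c + d != 0 ->
  \int[mu]_(x in `[0, T]) (sin (c * x) * sin (d * x)) = if c == d then T / 2 else 0.
Proof.
move=> Tc Td cd0; under eq_Rintegral do rewrite sin_mul_sin.
have cos_int e : mu.-integrable `[0, T] (EFin \o fun x => cos (e * x)).
  exact/continuous_integrable_itv/continuous_cos_scale.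
rewrite RintegralZl //; last first.
  apply: continuous_integrable_itv => x.
  exact: continuousB (continuous_cos_scale _ x) (continuous_cos_scale _ x).
rewrite RintegralB // !Rintegral_cos_full_period ?(negbTE cd0); last 2 first.
- exact: full_periodD.
- exact/full_periodD/full_periodN.
by rewrite subr_eq0 subr0; case: eqP; rewrite ?mulr0 // mulrC.
Qed.

Lemma Rintegral_sin_mul_sin_mul_sin c d e :
  full_period T c -> full_period T d -> full_period T e ->
  \int[mu]_(x in `[0, T]) (sin (c * x) * sin (d * x) * sin (e * x)) = 0.
Proof.
move=> Tc Td Te; under eq_Rintegral do rewrite sin_mul_sin_mul_sin.
rewrite RintegralZl //; last first.
  by apply/continuous_integrable_itv/continuous_sum => f; exact: continuous_sin_scale.
rewrite Rintegral_itv_sum; last exact: continuous_sin_scale.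
rewrite !big_cons big_nil !Rintegral_sin_full_period ?addr0 ?mulr0 //.
all: by do ![apply: full_periodD | apply: full_periodN].
Qed.
End trigonometric_integrals.

Section sin_quadratic_form.
Context {R : realType} {N : nat}.
Variable om : 'I_N -> R.
Notation mu := (@lebesgue_measure R).

Definition sin_vec (t : R) : 'cV[R]_N := \col_j sin (om j * t).

Lemma sin_vec_form (r : 'rV[R]_N) t :
  (r *m sin_vec t) 0 0 = \sum_j r 0 j * sin (om j * t).
Proof. by rewrite mxE; apply: eq_bigr => j _; rewrite mxE. Qed.

Lemma sin_vec_quadratic_form (P : 'M[R]_N) t :
  ((sin_vec t)^T *m P *m sin_vec t) 0 0 =
  \sum_j' \sum_j P j j' * (sin (om j * t) * sin (om j' * t)).
Proof.
rewrite mxE; apply: eq_bigr => j' _; rewrite !mxE mulr_suml.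
by apply: eq_bigr => j _; rewrite !mxE; ring.
Qed.

Lemma continuous_sin_vec_form (r : 'rV[R]_N) :
  continuous (fun t => (r *m sin_vec t) 0 0).
Proof.
under eq_fun do rewrite sin_vec_form.
apply: continuous_sum => j.
by apply: continuous_mul; [exact: cst_continuous | exact: continuous_sin_scale].
Qed.

Lemma continuous_sin_vec_quadratic_form (P : 'M[R]_N) :
  continuous (fun t => ((sin_vec t)^T *m P *m sin_vec t) 0 0).
Proof.
under eq_fun do rewrite sin_vec_quadratic_form.
apply: continuous_sum => j'; apply: continuous_sum => j.
apply: continuous_mul; first exact: cst_continuous.
by apply: continuous_mul; exact: continuous_sin_scale.
Qed.

Variables (T : R) (T_gt0 : 0 < T).
Hypotheses (om_gt0 : forall j, 0 < om j) (om_inj : injective om)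
  (om_full : forall j, full_period T (om j)).

Lemma Rintegral_sin_vec_form (r : 'rV[R]_N) m :
  \int[mu]_(t in `[0, T]) ((r *m sin_vec t) 0 0 * sin (om m * t)) = T / 2 * r 0 m.
Proof.
have css j : continuous (fun t => sin (om j * t) * sin (om m * t)).
  by apply: continuous_mul; exact: continuous_sin_scale.
under eq_Rintegral do rewrite sin_vec_form mulr_suml.
under eq_Rintegral do under eq_bigr do rewrite -mulrA.
rewrite Rintegral_itv_sum => [|j]; last first.
  by apply: continuous_mul; [exact: cst_continuous | exact: css].
have om_sum_neq0 j : om j + om m != 0 by rewrite gt_eqF // addr_gt0.
rewrite (bigD1 m) //= big1 => [|j jm].
  rewrite RintegralZl ?Rintegral_sin_mul_sin ?eqxx ?addr0 1?mulrC //.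
  exact: continuous_integrable_itv.
rewrite RintegralZl ?Rintegral_sin_mul_sin ?(inj_eq om_inj) ?(negbTE jm) ?mulr0 //.
exact: continuous_integrable_itv.
Qed.

Lemma Rintegral_sin_vec_quadratic_form (P : 'M[R]_N) m :
  \int[mu]_(t in `[0, T])
    (((sin_vec t)^T *m P *m sin_vec t) 0 0 * sin (om m * t)) = 0.
Proof.
have csss j j' : continuous (fun t => sin (om j * t) * sin (om j' * t) * sin (om m * t)).
  by do ![apply: continuous_mul | exact: continuous_sin_scale].
under eq_Rintegral do rewrite sin_vec_quadratic_form mulr_suml.
under eq_Rintegral do under eq_bigr do rewrite mulr_suml.
under eq_Rintegral do under eq_bigr do under eq_bigr do rewrite -mulrA.
rewrite Rintegral_itv_sum => [|j']; last first.
  apply: continuous_sum => j.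
  by apply: continuous_mul; [exact: cst_continuous | exact: csss].
apply: big1 => j' _; rewrite Rintegral_itv_sum => [|j]; last first.
  by apply: continuous_mul; [exact: cst_continuous | exact: csss].
apply: big1 => j _; rewrite RintegralZl ?Rintegral_sin_mul_sin_mul_sin ?mulr0 //.
exact: continuous_integrable_itv.
Qed.

Lemma Rintegral_sin_quadratic_form (c : R) (r : 'rV[R]_N) (P : 'M[R]_N) m :
  \int[mu]_(t in `[0, T])
    ((c + (r *m sin_vec t) 0 0 + ((sin_vec t)^T *m P *m sin_vec t) 0 0)
     * sin (om m * t)) = T / 2 * r 0 m.
Proof.
have cs := continuous_sin_scale (om m).
have cc : continuous (fun t : R => c) by exact: cst_continuous.
have cl := continuous_sin_vec_form r.
have cq := continuous_sin_vec_quadratic_form P.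
have ccl : continuous (fun t => c + (r *m sin_vec t) 0 0).
  by move=> x; apply: continuousD; [exact: cc | exact: cl].
under eq_Rintegral do rewrite mulrDl.
rewrite RintegralD //; try exact/continuous_integrable_itv/continuous_mul.
under eq_Rintegral do rewrite mulrDl.
rewrite RintegralD //; try exact/continuous_integrable_itv/continuous_mul.
rewrite Rintegral_sin_vec_form Rintegral_sin_vec_quadratic_form addr0.
rewrite RintegralZl ?Rintegral_sin_full_period ?mulr0 ?add0r //.
exact: continuous_integrable_itv.
Qed.
End sin_quadratic_form.

Section quadratic_game.
Context {R : realType} {N : nat}.
Implicit Types (Q : 'I_N -> 'M[R]_N) (b : 'I_N -> 'cV[R]_N) (u v : 'cV[R]_N).

Lemma Jcost_shift Q b (p : 'I_N -> R) m u v : (Q m)^T = Q m ->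
  Jcost Q b p m (u + v) = Jcost Q b p m u + ((Q m *m u + b m)^T *m v) 0 0
    + 2^-1 * (v^T *m Q m *m v) 0 0.
Proof.
move=> Qsym; have cross : (v^T *m Q m *m u) 0 0 = (u^T *m Q m *m v) 0 0.
  have -> : v^T *m Q m *m u = (u^T *m Q m *m v)^T.
    by rewrite !trmx_mul trmxK Qsym mulmxA.
  exact: mxE.
rewrite /Jcost !linearD /= trmx_mul Qsym !mulmxDl.
move: cross; set uQu := u^T *m Q m *m u; set uQv := u^T *m Q m *m v.
set vQu := v^T *m Q m *m u; set vQv := v^T *m Q m *m v.
set bu := (b m)^T *m u; set bv := (b m)^T *m v.
by rewrite !mxE => ->; field.
Qed.

Context {n : nat}.
Variables (hn : (n <= N)%N) (delta : 'I_n -> R) (D : 'I_n -> {set 'I_N}).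

Definition deception_mx : 'M[R]_N :=
  \matrix_(l, j) ((l == j)%:R +
    \sum_(i < n | widen_ord hn i == l) delta i * (j \in D i)%:R).

Lemma mu_tilde_deception_mx (om : 'I_N -> R) t :
  mu_tilde hn om delta D t = deception_mx *m sin_vec om t.
Proof.
apply/matrixP => l z; rewrite (ord1 z) !mxE.
under [RHS]eq_bigr do rewrite !mxE mulrDl.
rewrite big_split /= (bigD1 l) //= eqxx mul1r.
rewrite [X in _ = _ + X + _]big1 ?addr0 => [|j jl]; last first.
  by rewrite eq_sym (negbTE jl) mul0r.
congr (_ + _); under [RHS]eq_bigr do rewrite mulr_suml.
rewrite exchange_big /=; apply: eq_bigr => i _.
rewrite big_mkcond big_distrr /=; apply: eq_bigr => j _.
by case: (j \in D i); rewrite ?mulr1 ?mulr0 ?mul0r // mulrA.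
Qed.

Lemma trmx_mul_deception_mx (g : 'cV[R]_N) m :
  (g^T *m deception_mx) 0 m =
  g m 0 + \sum_(j < n | m \in D j) delta j * g (widen_ord hn j) 0.
Proof.
rewrite mxE; under eq_bigr do rewrite !mxE mulrDr big_distrr /=.
rewrite big_split /= (bigD1 m) //= eqxx mulr1.
rewrite [X in _ + X + _ = _]big1 ?addr0 => [|l lm]; last first.
  by rewrite (negbTE lm) mulr0.
congr (_ + _); under eq_bigr do rewrite big_mkcond /=.
rewrite exchange_big /= [RHS]big_mkcond /=; apply: eq_bigr => j _.
rewrite -big_mkcond /= (big_pred1 (widen_ord hn j)) => [|l]; last by rewrite eq_sym.
by case: (m \in D j); rewrite ?mulr1 ?mulr0 // mulrC.
Qed.

Lemma Qdelta_Bdelta_entry Q b u m :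
  (Qdelta hn Q delta D *m u + Bdelta hn b delta D) m 0 =
  ((Q m *m u + b m)^T *m deception_mx) 0 m.
Proof.
rewrite trmx_mul_deception_mx !mxE; under eq_bigr do rewrite !mxE mulrDl.
rewrite big_split /=; under [X in _ + X + _ = _]eq_bigr do rewrite mulr_suml.
rewrite (exchange_big _ _ _ _ (fun j => m \in D j)) /=.
under [X in _ = _ + X]eq_bigr do rewrite !mxE mulrDr big_distrr /=.
rewrite big_split /=.
under [X in _ + X + _ = _]eq_bigr do under eq_bigr do rewrite -mulrA.
ring.
Qed.

End quadratic_game.

Theorem mainTheorem2 (R : realType) (N n : nat) (hn : (n <= N)%N)
  (Q : 'I_N -> 'M[R]_N) (b : 'I_N -> 'cV[R]_N) (p : 'I_N -> R)
  (hQ : forall m, (Q m)^T = Q m)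
  (D : 'I_n -> {set 'I_N})
  (hD_ne : forall i, D i != finset.set0)
  (hD_self : forall i, widen_ord hn i \notin D i)
  (delta : 'I_n -> R)
  (om : 'I_N -> rat)
  (hom_pos : forall m, 0 < om m)
  (hom_inj : injective om)
  (T : R) (hT : 0 < T)
  (hper : forall m tau, sin (ratr (om m) * (tau + T)) = sin (ratr (om m) * tau))
  (a k : R) (ha : 0 < a) (hk : 0 < k) (u : 'cV[R]_N) (m : 'I_N) :
  T^-1 * (\int[lebesgue_measure]_(tau in `[0, T])
     (- (2 * k / a) *
        Jcost Q b p m (u + a *: mu_tilde hn (fun j => ratr (om j)) delta D tau)
        * sin (ratr (om m) * tau)))
  = - k * (Qdelta hn Q delta D *m u + Bdelta hn b delta D) m ord0.
Proof.
pose w j : R := ratr (om j).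
have w_gt0 j : 0 < w j by rewrite ltr0q.
have w_inj : injective w by move=> i j /fmorph_inj /hom_inj.
have w_full j : full_period T (w j) := full_period_sin_periodic (hper j).
set M := deception_mx hn delta D.
set g := Q m *m u + b m.
have integrand t :
    - (2 * k / a) * Jcost Q b p m (u + a *: mu_tilde hn w delta D t) * sin (w m * t)
    = (- (2 * k / a) * Jcost Q b p m u
       + (((- 2 * k) *: (g^T *m M)) *m sin_vec w t) 0 0
       + ((sin_vec w t)^T *m ((- (k * a)) *: (M^T *m Q m *m M)) *m sin_vec w t) 0 0)
      * sin (w m * t).
  rewrite mu_tilde_deception_mx Jcost_shift // -/g -/M [(a *: _)^T]linearZ /=.
  rewrite trmx_mul -!scalemxAr -!scalemxAl -?scalemxAr !mulmxA !mxE.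
  by congr (_ * _); field; rewrite gt_eqF.
under eq_Rintegral do rewrite integrand.
rewrite Rintegral_sin_quadratic_form // mxE Qdelta_Bdelta_entry.
by field; rewrite gt_eqF.
Qed.
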